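(* Normalize $\operatorname{var}(X)=1$ and $\operatorname{var}(W_1)=I_{d_1}$, suppose $\operatorname{var}(Y,X,W_1)$ is positive definite, $\sigma_{W_1,Y}\ne\sigma_{X,Y}\sigma_{W_1,X}$, and $\|c\|<1$. For any $r_X\in\mathbb R^{d_1}$ with $r_X'c\ne-1$ and $0<z_X(r_X,c)^2<k_0$, $$\bigcup_{r_Y\in\mathbb R^{d_1}}\mathcal B(r_X,r_Y,c)=\big(\beta_{\text{med}}-\sqrt{\text{devsq}(z_X(r_X,c))},\ \beta_{\text{med}}+\sqrt{\text{devsq}(z_X(r_X,c))}\big)\setminus\mathcal B^0,$$ where $\mathcal B^0$ is a set containing at most one point.
   Context: For random vectors $A,B$ with $\operatorname{var}(B)$ invertible, $A^{\perp B}=A-\operatorname{cov}(A,B)\operatorname{var}(B)^{-1}B$. $\sigma_{A,B}=\operatorname{cov}(A,B)$. $\beta_{\text{med}}$ is the coefficient on $X$ in the linear projection of $Y$ on $(1,X,W_1)$. $k_0=\operatorname{var}(X^{\perp W_1})$, $k_1=\operatorname{cov}(Y^{\perp W_1},X^{\perp W_1})$; $\text{devsq}(z)=\frac{\operatorname{var}(Y^{\perp X,W_1})}{k_0}\frac{z^2}{k_0-z^2}$; $z_X(r_X,c)=\frac{r_X'\sigma_{W_1,X}\sqrt{1-\|c\|^2}}{1+r_X'c}$. For $r_X,r_Y,c\in\mathbb R^{d_1}$, $\mathcal B(r_X,r_Y,c)$ is the set of $b\in\mathbb R$ such that for some $(p_1,g_1)\in\mathbb R^{d_1}\times\mathbb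 R^{d_1}$ (with $\Sigma_{\text{obs}}=\operatorname{var}(W_1)$): $\operatorname{cov}(Y,X)=b\operatorname{var}(X)+g_1'(\Sigma_{\text{obs}}+cr_X'+r_Yc'+r_Yr_X')p_1$; $\operatorname{cov}(Y,W_1)=b\operatorname{cov}(X,W_1)+g_1'(\Sigma_{\text{obs}}+r_Yc')$; $\operatorname{cov}(X,W_1)=p_1'(\Sigma_{\text{obs}}+r_Xc')$; $\operatorname{var}(Y)>b^2\operatorname{var}(X)+g_1'(\Sigma_{\text{obs}}+r_Yr_Y'+2r_Yc')g_1+2bg_1'(\Sigma_{\text{obs}}+cr_X'+r_Yc'+r_Yr_X')p_1$; $\operatorname{var}(X)>p_1'(\Sigma_{\text{obs}}+2r_Xc'+r_Xr_X')p_1$; $1>c'\Sigma_{\text{obs}}^{-1}c$. *)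

(* Second-moment model of (Y, X, W_1): everything in the
   statement depends on the random vectors only through their joint
   covariance matrix, which we take as the primitive data. *)
From HB Require Import structures.
From mathcomp Require Import all_boot all_order all_algebra.
From mathcomp Require Import reals.
Set Implicit Arguments. Unset Strict Implicit. Unset Printing Implicit Defensive.
Import Order.TTheory GRing.Theory Num.Theory.
Local Open Scope ring_scope.

Section Defs.
Variable R : realType.
Variable d1 : nat.

(* Second moments:  vY = var Y, vX = var X, sXY = cov(X,Y),
   sWY = cov(W1,Y), sWX = cov(W1,X) (column vectors), SW = var W1. *)

Definition sc (M : 'M[R]_1) : R := M 0 0.

Definition vnorm (c : 'cV[R]_d1) : R := Num.sqrt (sc (c^T *m c)).

(* var(Y, X, W1) as a (2 + d1) x (2 + d1) matrix, ordered (Y, X, W1) *)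
Definition jointVar (vY vX sXY : R) (sWY sWX : 'cV[R]_d1) (SW : 'M[R]_d1)
  : 'M[R]_(2 + d1) :=
  block_mx (\matrix_(i < 2, j < 2)
              (if (i == 0 :> nat) && (j == 0 :> nat) then vY
               else if (i == 1 :> nat) && (j == 1 :> nat) then vX else sXY))
           (col_mx sWY^T sWX^T)
           (row_mx sWY sWX) SW.

Definition posdef n (M : 'M[R]_n) : Prop :=
  forall v : 'cV[R]_n, v != 0 -> 0 < sc (v^T *m M *m v).

Definition varXW (vX : R) (sWX : 'cV[R]_d1) (SW : 'M[R]_d1) : 'M[R]_(1 + d1) :=
  block_mx vX%:M sWX^T sWX SW.
Definition covXWY (sXY : R) (sWY : 'cV[R]_d1) : 'cV[R]_(1 + d1) :=
  col_mx sXY%:M sWY.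

(* beta_med: coefficient on X in the linear projection of Y on (1, X, W1) *)
Definition beta_med (vX sXY : R) (sWY sWX : 'cV[R]_d1) (SW : 'M[R]_d1) : R :=
  (invmx (varXW vX sWX SW) *m covXWY sXY sWY) 0 0.

Definition varY_perp_XW (vY vX sXY : R) (sWY sWX : 'cV[R]_d1) (SW : 'M[R]_d1) : R :=
  vY - sc ((covXWY sXY sWY)^T *m invmx (varXW vX sWX SW) *m covXWY sXY sWY).

(* k0 = var(X^{perp W1}) *)
Definition k0 (vX : R) (sWX : 'cV[R]_d1) (SW : 'M[R]_d1) : R :=
  vX - sc (sWX^T *m invmx SW *m sWX).

(* k1 = cov(Y^{perp W1}, X^{perp W1}) *)
Definition k1 (sXY : R) (sWY sWX : 'cV[R]_d1) (SW : 'M[R]_d1) : R :=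
  sXY - sc (sWY^T *m invmx SW *m sWX).

Definition devsq (vY vX sXY : R) (sWY sWX : 'cV[R]_d1) (SW : 'M[R]_d1) (z : R) : R :=
  varY_perp_XW vY vX sXY sWY sWX SW / k0 vX sWX SW
  * (z ^+ 2 / (k0 vX sWX SW - z ^+ 2)).

Definition zX (sWX : 'cV[R]_d1) (rX c : 'cV[R]_d1) : R :=
  sc (rX^T *m sWX) * Num.sqrt (1 - vnorm c ^+ 2) / (1 + sc (rX^T *m c)).

Definition Bset (vY vX sXY : R) (sWY sWX : 'cV[R]_d1) (SW : 'M[R]_d1)
  (rX rY c : 'cV[R]_d1) (b : R) : Prop :=
  exists p1 g1 : 'cV[R]_d1,
    [/\ sXY = b * vX
              + sc (g1^T *m (SW + c *m rX^T + rY *m c^T + rY *m rX^T) *m p1),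
        sWY^T = b *: sWX^T + g1^T *m (SW + rY *m c^T),
        sWX^T = p1^T *m (SW + rX *m c^T) &
      [/\
        b ^+ 2 * vX + sc (g1^T *m (SW + rY *m rY^T + 2%:R *: (rY *m c^T)) *m g1)
          + 2%:R * b * sc (g1^T *m (SW + c *m rX^T + rY *m c^T + rY *m rX^T) *m p1)
          < vY,
        sc (p1^T *m (SW + 2%:R *: (rX *m c^T) + rX *m rX^T) *m p1) < vX
      & sc (c^T *m invmx SW *m c) < 1]].

End Defs.

(* In the standardized model every constraint defining B(r_X, r_Y, c) is
   linear in the unknowns once one notes that x' (I + w c') = (x + (w'x) c)'.
   The equation for cov(X, W1) forces p1 = sWX - lambda c with
   lambda = r_X'sWX / (1 + r_X'c); the one for cov(Y, W1) forces
   g1 = sWY - b sWX - beta c with beta = r_Y'g1; and the one for cov(Y, X)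
   pins beta = (k1 - b k0) / (lambda (1 - |c|^2)).  The var(X) constraint is
   then z_X^2 < k0, and the var(Y) constraint is the quadratic inequality
   (1 - |c|^2) beta^2 < var(Y) - |sWY|^2 - 2 b k1 + b^2 k0, which is exactly
   the open interval around beta_med = k1 / k0.  A direction r_Y with
   r_Y'g1 = beta exists unless g1 = 0 while beta <> 0; as b varies, g1 is an
   affine function of b, so if this happened at two points, sWY and sWX
   would both be multiples of c, which forces sWY = sXY sWX. *)

From HB Require Import structures.
From mathcomp Require Import all_boot all_order all_algebra.
From mathcomp Require Import reals.
From mathcomp Require Import ring lra.
Import Order.TTheory GRing.Theory Num.Theory.
Set Implicit Arguments. Unset Strict Implicit.
Local Open Scope ring_scope.

Section DotProduct.
Variables (R : realType) (n : nat).
Implicit Types (u v w : 'cV[R]_n).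

Definition dot u v : R := sc (u^T *m v).

Lemma sc_mul (M N : 'M[R]_1) : sc (M *m N) = sc M * sc N.
Proof. by rewrite /sc mxE big_ord1. Qed.

Lemma sc_add (M N : 'M[R]_1) : sc (M + N) = sc M + sc N.
Proof. by rewrite /sc mxE. Qed.

Lemma sc_scale k (M : 'M[R]_1) : sc (k *: M) = k * sc M.
Proof. by rewrite /sc mxE. Qed.

Lemma sc_tr (M : 'M[R]_1) : sc M^T = sc M.
Proof. by rewrite /sc mxE. Qed.

Lemma mulmx_trcV u v : u^T *m v = (dot u v)%:M.
Proof. exact: mx11_scalar. Qed.

Lemma dotC u v : dot u v = dot v u.
Proof. by rewrite /dot -sc_tr trmx_mul trmxK. Qed.

Lemma dotDl u v w : dot (u + v) w = dot u w + dot v w.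
Proof. by rewrite /dot linearD /= mulmxDl sc_add. Qed.

Lemma dotZl k u v : dot (k *: u) v = k * dot u v.
Proof. by rewrite /dot linearZ /= -scalemxAl sc_scale. Qed.

Lemma dotNl u v : dot (- u) v = - dot u v.
Proof. by rewrite -scaleN1r dotZl mulN1r. Qed.

Lemma dotBl u v w : dot (u - v) w = dot u w - dot v w.
Proof. by rewrite dotDl dotNl. Qed.

Lemma dotDr u v w : dot w (u + v) = dot w u + dot w v.
Proof. by rewrite dotC dotDl !(dotC w). Qed.

Lemma dotZr k u v : dot u (k *: v) = k * dot u v.
Proof. by rewrite dotC dotZl dotC. Qed.

Lemma dotBr u v w : dot w (u - v) = dot w u - dot w v.
Proof. by rewrite dotC dotBl !(dotC w). Qed.

Lemma dot0r u : dot u 0 = 0.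
Proof. by rewrite -(scale0r 0) dotZr mul0r. Qed.

Lemma dotE u v : dot u v = \sum_i u i 0 * v i 0.
Proof. by rewrite /dot /sc mxE; apply: eq_bigr => i _; rewrite mxE. Qed.

Lemma dot_ge0 u : 0 <= dot u u.
Proof. by rewrite dotE sumr_ge0 // => i _; rewrite -expr2 sqr_ge0. Qed.

Lemma dot_eq0 u : (dot u u == 0) = (u == 0).
Proof.
apply/eqP/eqP=> [|->]; last exact: dot0r.
rewrite dotE => /psumr_eq0P u0; apply/matrixP => i j.
rewrite (ord1 j) mxE; apply/eqP; rewrite -sqrf_eq0 expr2 u0 //.
by move=> k _; rewrite -expr2 sqr_ge0.
Qed.

Lemma exists_dot_eq u (beta : R) :
  (exists w, dot u w = beta) <-> ~ (u = 0 /\ beta != 0).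
Proof.
split=> [[w <-] [-> /eqP]|]; first by rewrite dotC dot0r.
have [-> nz|u0 _] := eqVneq u 0.
  have [->|beta0] := eqVneq beta 0; first by exists 0; rewrite dot0r.
  by case: nz.
exists ((beta / dot u u) *: u); rewrite dotZr divfK //.
by rewrite dot_eq0.
Qed.

Lemma form_outer u v x y : sc (x^T *m (u *m v^T) *m y) = dot x u * dot v y.
Proof. by rewrite !mulmxA -sc_mul -mulmxA. Qed.

End DotProduct.

Section Tilt.
Variables (R : realType) (n : nat) (c : 'cV[R]_n).
Implicit Types (w x y s : 'cV[R]_n).

Definition tilt w x := x + dot w x *: c.

Lemma tilt_mulmx w x : x^T *m (1%:M + w *m c^T) = (tilt w x)^T.
Proof.
by rewrite mulmxDr mulmx1 mulmxA mulmx_trcV mul_scalar_mx linearD /= linearZ /= dotC.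
Qed.

Lemma dot_tilt w x : dot w (tilt w x) = dot w x * (1 + dot w c).
Proof. by rewrite dotDr dotZr; ring. Qed.

Lemma tilt_eq w x s : 1 + dot w c != 0 ->
  tilt w x = s <-> x = s - (dot w s / (1 + dot w c)) *: c.
Proof.
move=> e0; split=> [<-|->]; first by rewrite dot_tilt mulfK // addrK.
rewrite /tilt; have -> : dot w (s - (dot w s / (1 + dot w c)) *: c) = dot w s / (1 + dot w c).
  by rewrite dotBr dotZr; field.
by rewrite subrK.
Qed.

Lemma bilin_form_tilt w w' x y :
  sc (x^T *m (1%:M + c *m w'^T + w *m c^T + w *m w'^T) *m y) =
  dot (tilt w x) (tilt w' y) + (1 - dot c c) * dot w x * dot w' y.
Proof.
rewrite !mulmxDr !mulmxDl !sc_add mulmx1 !form_outer.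
rewrite !(dotDl, dotDr, dotZl, dotZr) -/(dot x y) (dotC x w).
ring.
Qed.

Lemma quad_form_tilt w x :
  sc (x^T *m (1%:M + w *m w^T + 2%:R *: (w *m c^T)) *m x) =
  dot (tilt w x) (tilt w x) + (1 - dot c c) * dot w x ^+ 2.
Proof.
rewrite !mulmxDr !mulmxDl !sc_add mulmx1 -scalemxAr -scalemxAl sc_scale.
rewrite !form_outer !(dotDl, dotDr, dotZl, dotZr) -/(dot x x) (dotC x w) (dotC x c).
ring.
Qed.

End Tilt.

Section StandardizedModel.
Variables (R : realType) (n : nat).
Implicit Types (s t c w : 'cV[R]_n) (sXY vY : R).

Lemma invmx_varXW_std s : 1 - dot s s != 0 ->
  invmx (varXW 1 s 1%:M) =
  block_mx ((1 - dot s s)^-1)%:M (- (1 - dot s s)^-1 *: s^T)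
           (- (1 - dot s s)^-1 *: s) (1%:M + (1 - dot s s)^-1 *: (s *m s^T)).
Proof.
move=> k0; set B := block_mx _ _ _ _.
have VB : varXW 1 s 1%:M *m B = 1%:M.
  rewrite /varXW /B mulmx_block scalar_mx_block !mul1mx; congr block_mx.
  - rewrite -scalemxAr mulmx_trcV; apply/matrixP => i j.
    by rewrite !ord1 !mxE /=; field.
  - rewrite mulmxDr mulmx1 -scalemxAr mulmxA mulmx_trcV mul_scalar_mx.
    by apply/matrixP => i j; rewrite !mxE /=; field.
  - by rewrite mul_mx_scalar; apply/matrixP => i j; rewrite !mxE /=; ring.
  - by rewrite -scalemxAr addrCA -scalerDl addNr scale0r addr0.
have [Vu _] := mulmx1_unit VB.
by rewrite -[RHS]mul1mx -(mulVmx Vu) -mulmxA VB mulmx1.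
Qed.

Lemma k0_std s : k0 1 s 1%:M = 1 - dot s s.
Proof. by rewrite /k0 invmx1 mulmx1. Qed.

Lemma k1_std sXY t s : k1 sXY t s 1%:M = sXY - dot t s.
Proof. by rewrite /k1 invmx1 mulmx1. Qed.

Lemma beta_med_std sXY t s : 1 - dot s s != 0 ->
  beta_med 1 sXY t s 1%:M = k1 sXY t s 1%:M / k0 1 s 1%:M.
Proof.
move=> k0; rewrite k0_std k1_std /beta_med invmx_varXW_std // /covXWY mul_block_col.
have -> : (0 : 'I_(1 + n)) = lshift n 0 by apply/val_inj.
rewrite col_mxEu -scalemxAl mulmx_trcV mul_scalar_mx !mxE /= (dotC s t).
by field.
Qed.

Lemma varY_perp_XW_std vY sXY t s : 1 - dot s s != 0 ->
  varY_perp_XW vY 1 sXY t s 1%:M =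
  vY - dot t t - k1 sXY t s 1%:M ^+ 2 / k0 1 s 1%:M.
Proof.
move=> k0; rewrite k0_std k1_std /varY_perp_XW invmx_varXW_std // /covXWY.
rewrite tr_col_mx mul_row_block mul_row_col tr_scalar_mx mulmxDr mulmx1.
rewrite -!scalemxAr mulmxA !mulmx_trcV !mul_scalar_mx !mulmxDl -!scalemxAl.
rewrite !mulmx_trcV !mul_scalar_mx /sc !mxE /= (dotC s t) !mulr1n.
by field.
Qed.

Lemma zX_sqr s w c : dot c c <= 1 ->
  zX s w c ^+ 2 = (dot w s / (1 + dot w c)) ^+ 2 * (1 - dot c c).
Proof.
move=> c1; rewrite /zX /vnorm -/(dot w s) -/(dot w c) -/(dot c c).
by rewrite sqr_sqrtr ?dot_ge0 // !expr_div_n exprMn sqr_sqrtr ?subr_ge0 // mulrAC.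
Qed.

End StandardizedModel.

Section IdentifiedSet.
Variables (R : realType) (n : nat) (vY sXY : R) (t s c rX : 'cV[R]_n).

Lemma Bset_std_tiltE b q :
  Bset vY 1 sXY t s 1%:M rX q c b <->
  exists p g, [/\ tilt c rX p = s, tilt c q g = t - b *: s &
    [/\ k1 sXY t s 1%:M - b * k0 1 s 1%:M = (1 - dot c c) * dot q g * dot rX p,
        (1 - dot c c) * dot q g ^+ 2 <
          vY - dot t t - 2%:R * b * k1 sXY t s 1%:M + b ^+ 2 * k0 1 s 1%:M,
        (1 - dot c c) * dot rX p ^+ 2 < k0 1 s 1%:M
      & dot c c < 1]].
Proof.
have rowE (a : R) (u v w : 'cV[R]_n) : u^T = a *: v^T + w^T <-> w = u - a *: v.
  split=> [/(congr1 trmx)|->]; last by rewrite linearB linearZ /= addrC subrK.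
  by rewrite trmxK linearD linearZ /= !trmxK => ->; rewrite addrC addKr.
have scalarE p g : tilt c rX p = s -> tilt c q g = t - b *: s ->
  [/\ sXY = b + (dot (tilt c q g) (tilt c rX p) + (1 - dot c c) * dot q g * dot rX p),
      b ^+ 2 + (dot (tilt c q g) (tilt c q g) + (1 - dot c c) * dot q g ^+ 2)
        + 2%:R * b * (dot (tilt c q g) (tilt c rX p)
                      + (1 - dot c c) * dot q g * dot rX p) < vY,
      dot (tilt c rX p) (tilt c rX p) + (1 - dot c c) * dot rX p ^+ 2 < 1
    & dot c c < 1] <->
  [/\ sXY - dot t s - b * (1 - dot s s) = (1 - dot c c) * dot q g * dot rX p,
      (1 - dot c c) * dot q g ^+ 2 <
        vY - dot t t - 2%:R * b * (sXY - dot t s) + b ^+ 2 * (1 - dot s s),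
      (1 - dot c c) * dot rX p ^+ 2 < 1 - dot s s
    & dot c c < 1].
  move=> -> ->; rewrite !(dotBl, dotBr, dotZl, dotZr) (dotC s t).
  set beta := dot q g; set lambda := dot rX p.
  (* [sXY] occurs multiplied by [b], out of reach of [lra]: substitute it. *)
  split=> -[E1 I2 I3 I4];
    have {}E1 : sXY = b + dot t s - b * dot s s + (1 - dot c c) * beta * lambda;
    by [lra | move: I2; rewrite E1 => I2; split=> //; lra].
rewrite /Bset invmx1 mulmx1 k0_std k1_std.
split=> [[p [g [E1 E2 E3 [I4 I5 I6]]]] | [p [g [Hs Hg C]]]]; exists p, g.
- rewrite [1%:M + 2%:R *: _ + _]addrAC !tilt_mulmx bilin_form_tilt !quad_form_tilt !mulr1 in E1 E2 E3 I4 I5.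
  move: E2 E3 => /rowE Hg /trmx_inj/esym Hs.
  by split=> //; apply/scalarE.
- have [E1 I4 I5 I6] := (scalarE p g Hs Hg).2 C.
  rewrite [1%:M + 2%:R *: _ + _]addrAC !tilt_mulmx bilin_form_tilt !quad_form_tilt !mulr1.
  by split=> //; [apply/rowE | rewrite Hs].
Qed.

Variable lambda : R.
Hypothesis c_lt1 : dot c c < 1.
Hypothesis rXc_neq : 1 + dot rX c != 0.
Hypothesis lambdaE : dot rX s = lambda * (1 + dot rX c).
Hypothesis lambda_neq0 : lambda != 0.
Hypothesis lambda_lt : lambda ^+ 2 * (1 - dot c c) < k0 1 s 1%:M.

Lemma exists_Bset_std_iff b beta :
  beta * (lambda * (1 - dot c c)) = k1 sXY t s 1%:M - b * k0 1 s 1%:M ->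
  (exists q, Bset vY 1 sXY t s 1%:M rX q c b) <->
  (k1 sXY t s 1%:M - b * k0 1 s 1%:M) ^+ 2 / (lambda ^+ 2 * (1 - dot c c)) <
     vY - dot t t - 2%:R * b * k1 sXY t s 1%:M + b ^+ 2 * k0 1 s 1%:M
  /\ ~ (t - b *: s - beta *: c = 0 /\ beta != 0).
Proof.
move=> betaE.
have mm_neq0 : 1 - dot c c != 0 by rewrite subr_eq0 eq_sym lt_eqF.
have ell_neq0 : lambda * (1 - dot c c) != 0 by rewrite mulf_neq0.
rewrite -betaE; have -> : (beta * (lambda * (1 - dot c c))) ^+ 2
    / (lambda ^+ 2 * (1 - dot c c)) = (1 - dot c c) * beta ^+ 2.
  by field; rewrite mm_neq0 lambda_neq0.
split.
- case=> q /Bset_std_tiltE [p [g [Hs Hg [E1 I2 _ _]]]].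
  have Hl : dot rX p = lambda.
    by apply: (mulIf rXc_neq); rewrite -lambdaE -Hs dot_tilt.
  have Hb : dot q g = beta.
    by apply: (mulIf ell_neq0); rewrite betaE E1 Hl; ring.
  have -> : t - b *: s - beta *: c = g by rewrite -Hg /tilt Hb addrK.
  split; first by rewrite -Hb.
  by case=> g0; rewrite -Hb g0 dot0r eqxx.
- case=> I nex; set g := t - b *: s - beta *: c in nex.
  have [q Hq] : exists q, dot q g = beta.
    by case/exists_dot_eq: nex => q; exists q; rewrite dotC.
  exists q; apply/Bset_std_tiltE; exists (s - lambda *: c), g.
  have Hl : dot rX (s - lambda *: c) = lambda.
    by rewrite dotBr dotZr lambdaE; ring.
  split.
  + by apply/tilt_eq => //; rewrite lambdaE mulfK.
  + by rewrite /tilt Hq subrK.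
  + rewrite Hq Hl -betaE; split=> //; last by rewrite mulrC.
    by ring.
Qed.

End IdentifiedSet.

Lemma affine_eq0_uniq (K : fieldType) (V : lmodType K) (A B : V) (x y : K) :
  A - x *: B = 0 -> A - y *: B = 0 -> x != y -> A = 0 /\ B = 0.
Proof.
move=> Ax Ay xy.
have : (y - x) *: B = (A - x *: B) - (A - y *: B) by rewrite scalerBl [A - _]addrC addrKA opprK addrC.
rewrite Ax Ay subrr => /eqP; rewrite scaler_eq0 subr_eq0 eq_sym (negbTE xy) /= => /eqP B0.
by move: Ax; rewrite B0 scaler0 subr0.
Qed.

Section Exceptional.
Variables (R : realType) (n : nat) (sXY : R) (t s : 'cV[R]_n).

Lemma cov_collinear :
  1 - dot s s != 0 -> (1 - dot s s) *: t = (sXY - dot t s) *: s -> t = sXY *: s.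
Proof.
move=> k0 E.
have ts : dot t s = sXY * dot s s.
  by have := congr1 (fun u => dot u s) E; rewrite /= !dotZl; lra.
apply: (scalerI k0); rewrite E ts scalerA; congr (_ *: _); ring.
Qed.

Lemma exceptional_uniq (c : 'cV[R]_n) (ell x y : R) :
  t != sXY *: s -> 1 - dot s s != 0 -> ell != 0 ->
  t - x *: s - ((sXY - dot t s - x * (1 - dot s s)) / ell) *: c = 0 ->
  t - y *: s - ((sXY - dot t s - y * (1 - dot s s)) / ell) *: c = 0 ->
  x = y.
Proof.
move=> t_ncol k0 ell0 Ex Ey; apply/eqP; apply: contraNT t_ncol => xy.
set A := ell *: t - (sXY - dot t s) *: c; set B := ell *: s - (1 - dot s s) *: c.
have affineE z : ell *: (t - z *: s - ((sXY - dot t s - z * (1 - dot s s)) / ell) *: c)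
    = A - z *: B.
  by apply/matrixP => i j; rewrite !mxE; field.
have [A0 B0] : A = 0 /\ B = 0.
  by apply: (affine_eq0_uniq _ _ xy); rewrite -affineE ?Ex ?Ey scaler0.
apply/eqP/cov_collinear => //; apply: (scalerI ell0).
move/subr0_eq: A0 => A0; move/subr0_eq: B0 => B0.
by rewrite !scalerA [ell * _]mulrC [ell * (sXY - _)]mulrC -!scalerA A0 B0 !scalerA mulrC.
Qed.
End Exceptional.

Lemma quadratic_lt_iff_interval (R : rcfType) (k0 k1 V z2 b : R) :
  0 < z2 -> z2 < k0 ->
  (k1 - b * k0) ^+ 2 / z2 < V - 2%:R * b * k1 + b ^+ 2 * k0 <->
  k1 / k0 - Num.sqrt ((V - k1 ^+ 2 / k0) / k0 * (z2 / (k0 - z2))) < b /\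
  b < k1 / k0 + Num.sqrt ((V - k1 ^+ 2 / k0) / k0 * (z2 / (k0 - z2))).
Proof.
move=> z2_gt0 z2_lt.
have k0_gt0 : 0 < k0 by apply: lt_trans z2_lt.
have k0z2_gt0 : 0 < k0 - z2 by rewrite subr_gt0.
set d := b - k1 / k0; set r := (V - k1 ^+ 2 / k0) / k0 * (z2 / (k0 - z2)).
have dE : (k1 - b * k0) ^+ 2 / z2 - (V - 2%:R * b * k1 + b ^+ 2 * k0) =
    (d ^+ 2 - r) * (k0 * (k0 - z2) / z2).
  by rewrite /d /r; field; rewrite !lt0r_neq0.
have -> : (k1 - b * k0) ^+ 2 / z2 < V - 2%:R * b * k1 + b ^+ 2 * k0 <-> d ^+ 2 < r.
  rewrite -subr_lt0 dE pmulr_llt0 ?subr_lt0 //.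
  by rewrite divr_gt0 ?mulr_gt0.
have -> : d ^+ 2 < r <-> `|d| < Num.sqrt r.
  have [r_gt0|r_le0] := ltrP 0 r; first by rewrite -ltr_sqrt // sqrtr_sqr.
  rewrite ler0_sqrtr // normr_lt0; split=> // d2_lt.
  by have := lt_le_trans d2_lt r_le0; rewrite ltNge sqr_ge0.
by rewrite ltr_norml /d; split=> [/andP[]|[]]; [split|]; lra.
Qed.

Theorem mainTheorem19 (R : realType) (d1 : nat)
  (vY vX sXY : R) (sWY sWX : 'cV[R]_d1) (SW : 'M[R]_d1)
  (hvX : vX = 1) (hSW : SW = 1%:M)
  (hpd : posdef (jointVar vY vX sXY sWY sWX SW))
  (hne : sWY != sXY *: sWX)
  (c : 'cV[R]_d1) (hc : vnorm c < 1)
  (rX : 'cV[R]_d1) (hrc : sc (rX^T *m c) != -1)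
  (hz0 : 0 < zX sWX rX c ^+ 2)
  (hz1 : zX sWX rX c ^+ 2 < k0 vX sWX SW) :
  exists B0 : R -> Prop,
    (forall x y, B0 x -> B0 y -> x = y) /\
    forall b : R,
      (exists rY : 'cV[R]_d1, Bset vY vX sXY sWY sWX SW rX rY c b) <->
      (beta_med vX sXY sWY sWX SW
         - Num.sqrt (devsq vY vX sXY sWY sWX SW (zX sWX rX c)) < b /\
       b < beta_med vX sXY sWY sWX SW
         + Num.sqrt (devsq vY vX sXY sWY sWX SW (zX sWX rX c)) /\
       ~ B0 b).
Proof.
subst vX SW.
have c_lt1 : dot c c < 1 by move: hc; rewrite /vnorm -[X in _ < X]sqrtr1 ltr_sqrt.
have rXc_neq0 : 1 + dot rX c != 0 by rewrite addrC addr_eq0.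
set lambda := dot rX sWX / (1 + dot rX c).
have z2E : zX sWX rX c ^+ 2 = lambda ^+ 2 * (1 - dot c c) by exact: zX_sqr (ltW c_lt1).
have lambda_neq0 : lambda != 0.
  by apply: contraTneq hz0 => l0; rewrite z2E l0 expr0n mul0r ltxx.
have k0_neq0 : 1 - dot sWX sWX != 0 by rewrite -k0_std gt_eqF // (lt_trans hz0).
have ell_neq0 : lambda * (1 - dot c c) != 0.
  by rewrite mulf_neq0 // subr_eq0 eq_sym lt_eqF.
pose beta x := (k1 sXY sWY sWX 1%:M - x * k0 1 sWX 1%:M) / (lambda * (1 - dot c c)).
exists (fun x => sWY - x *: sWX - beta x *: c = 0 /\ beta x != 0); split.
  move=> x y [Ex _] [Ey _].
  by apply: (exceptional_uniq (c := c) hne k0_neq0 ell_neq0);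
    rewrite -k0_std -k1_std; [exact: Ex | exact: Ey].
move=> b; rewrite /devsq varY_perp_XW_std // beta_med_std //.
rewrite (exists_Bset_std_iff vY _ _ _ lambda_neq0 _ (b := b) (beta := beta b)) //.
- by rewrite -z2E quadratic_lt_iff_interval //; split=> [[[]]|[? []]].
- by rewrite /lambda divfK.
- by rewrite -z2E.
- by rewrite /beta divfK.
Qed.
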